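(* Let $a\neq\pm1$ be a square-free integer and let $F$ be a finite Galois extension of $\mathbb{Q}$. Then there exists an integer $N$ such that whenever $a$ is an $m$th power in the compositum $F\cdot\mathbb{Q}^{\mathrm{ab}}$ (for a positive integer $m$), $m$ divides $N$.
   Context: $\mathbb{Q}^{\mathrm{ab}}$ denotes the maximal abelian extension of $\mathbb{Q}$ in a fixed algebraic closure containing $F$. *)

From HB Require Import structures.
From mathcomp Require Import all_boot all_order all_algebra all_field.
Set Implicit Arguments. Unset Strict Implicit. Unset Printing Implicit Defensive.
Import Order.TTheory GRing.Theory Num.Theory.
Local Open Scope ring_scope.

Definition subsetC := algC -> Prop.

Definition is_subfield (S : subsetC) : Prop :=
  [/\ S 0, S 1,
      (forall x y, S x -> S y -> S (x + y)),
      (forall x, S x -> S (- x)) &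
      ((forall x y, S x -> S y -> S (x * y)) /\
       (forall x, S x -> x != 0 -> S (x^-1)))].

Definition finite_over_Q (S : subsetC) : Prop :=
  exists s : seq algC, forall x, S x ->
    exists c : seq rat, x = \sum_(i < size s) ratr c`_i * s`_i.

Definition normal_over_Q (S : subsetC) : Prop :=
  forall (p : {poly rat}) (x : algC), irreducible_poly p -> S x ->
    root (map_poly ratr p) x ->
    forall y : algC, root (map_poly ratr p) y -> S y.

(* Finite Galois extension of Q inside algC (separability is automatic in
   characteristic 0). *)
Definition finite_galois_over_Q (K : subsetC) : Prop :=
  [/\ is_subfield K, finite_over_Q K & normal_over_Q K].

Definition field_aut_of (K : subsetC) (g : algC -> algC) : Prop :=
  [/\ (forall x, K x -> K (g x)),
      (forall x y, K x -> K y -> g (x + y) = g x + g y),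
      (forall x y, K x -> K y -> g (x * y) = g x * g y),
      g 1 = 1 &
      ((forall x y, K x -> K y -> g x = g y -> x = y) /\
       (forall y, K y -> exists2 x, K x & g x = y))].

Definition abelian_aut (K : subsetC) : Prop :=
  forall g h, field_aut_of K g -> field_aut_of K h ->
    forall x, K x -> g (h x) = h (g x).

(* Q^ab: the maximal abelian extension of Q in algC, i.e. the union of all
   finite abelian Galois extensions of Q inside algC. *)
Definition Qab : subsetC :=
  fun x => exists K : subsetC,
    [/\ finite_galois_over_Q K, abelian_aut K & K x].

Definition compositum (A B : subsetC) : subsetC :=
  fun x => forall S : subsetC, is_subfield S ->
    (forall y, A y -> S y) -> (forall y, B y -> S y) -> S x.

(* Square-free integers (0 is not square-free). *)
Definition squarefree_int (a : int) : Prop :=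
  forall d : int, (d * d %| a)%Z -> `|d| = 1.

From HB Require Import structures.
From mathcomp Require Import all_boot all_order all_algebra all_field.
Import Order.TTheory GRing.Theory Num.Theory.
Local Open Scope ring_scope.

(* Choose k > 0 such that the k-th iterate of every automorphism of algC fixes
   F: F is spanned by finitely many algebraic numbers, each with finitely many
   conjugates. Commutators of automorphisms fix every abelian Galois extension
   of Q and every root of unity, so the k-th iterates of commutators fix the
   compositum F.Q^ab pointwise. If x^m = a with x in F.Q^ab, the positive real
   root r = |a|^(1/m) differs from x by a root of unity and is fixed as well.
   Since a has a prime factor of multiplicity one, X^m - |a| is irreducible
   over Q, so some automorphism rho maps r to z r with z a primitive m-th root
   of unity. The commutator of rho with complex conjugation then maps r to
   z^2 r, hence z^(2k) = 1 and m divides 2k. *)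

Local Notation pQtoC := (map_poly (ratr : rat -> algC)).

Lemma map_polyOver1_num_field {Qs : fieldExtType rat}
    (QsC : {rmorphism Qs -> algC}) {p : {poly Qs}} :
  p \is a polyOver 1%VS -> exists q : {poly rat}, map_poly QsC p = pQtoC q.
Proof.
move=> /polyOverP Qp; have a_ i := sig_eqW (vlineP _ _ (Qp i)).
exists (\poly_(i < size p) sval (a_ i)); apply/polyP=> i.
rewrite coef_poly !coef_map coef_poly /=.
case: ifP => _; rewrite ?rmorph0 //; case: (a_ i) => a /= ->.
by rewrite alg_num_field fmorph_rat.
Qed.

Lemma aut_minCpoly_root (y z : algC) :
  root (minCpoly y) z -> exists nu : {rmorphism algC -> algC}, nu y = z.
Proof.
(* Extend the Q-isomorphism Q(y) -> Q(z) to the number field spanned by the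
   conjugates of y, which is a splitting field, and then to all of algC. *)
move=> rz; have [p [Dp _] dv_p] := minCpolyP y.
have [rs Drs] := closed_field_poly_normal (minCpoly y).
rewrite (monicP (minCpoly_monic y)) scale1r in Drs.
have [Qs [QsC [s1 Ds1 gen_s1]]] := num_field_exists rs.
have /mapP[yn _ Dy] : y \in map QsC s1.
  by rewrite Ds1 -root_prod_XsubC -Drs root_minCpoly.
have /mapP[zn _ Dz] : z \in map QsC s1 by rewrite Ds1 -root_prod_XsubC -Drs.
have hom1 : kHom 1 1 (\1%VF : 'End(Qs)) by rewrite kHom1.
have rzn : root (map_poly \1%VF (minPoly 1 yn)) zn.
  rewrite -(fmorph_root QsC) -Dz -map_poly_comp.
  rewrite (@eq_map_poly _ _ _ QsC) => [|b]; last by rewrite /= id_lfunE.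
  have [q Dq] := map_polyOver1_num_field QsC (minPolyOver 1 yn).
  have : root (pQtoC q) y by rewrite -Dq Dy fmorph_root root_minPoly.
  by rewrite Dq dv_p => /dvdpP[r ->]; rewrite rmorphM rootM /= -Dp rz orbT.
have hom_yz := kHomExtendP (subvv 1%VS) hom1 rzn.
pose pr := map_poly (in_alg Qs) p.
have Qpr : pr \is a polyOver 1%VS.
  by apply/polyOverP=> i; rewrite coef_map memvZ ?memv_line.
have split_pr : splittingFieldFor <<1; yn>>%AS pr fullv.
  apply: splittingFieldForS (sub1v _) (subvf _) _; exists s1 => //.
  congr (_ %= _): (eqpxx pr); apply/(map_poly_inj QsC).
  rewrite -map_poly_comp (@eq_map_poly _ _ _ ratr); last first.
    by move=> b /=; rewrite rmorphZ_num rmorph1 mulr1.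
  rewrite -Dp Drs -Ds1 big_map rmorph_prod /=; apply: eq_bigr => w _.
  by rewrite map_polyXsubC.
have [g homg Dg] := kHom_extends (sub1v _) hom_yz Qpr split_pr.
pose gRM : {rmorphism _ -> _} :=
  HB.pack (fun_of_lfun g) (GRing.isMonoidMorphism.Build _ _ g (kHom_monoid_morphism homg)).
have [nu Dnu] := extend_algC_subfield_aut QsC gRM.
exists nu; rewrite Dy -Dnu /= -Dg ?memv_adjoin //.
by rewrite (kHomExtend_val hom1 rzn).
Qed.

Lemma dvdn_of_normX_eq_natX {q : rat} {m b d l : nat} :
  (0 < m)%N -> prime l -> logn l b = 1%N -> `|q| ^+ m = (b ^ d)%:R -> (m %| d)%N.
Proof.
move=> m_gt0 l_pr lb Dq.
have b_gt0 : (0 < b)%N by case: b lb {Dq} => [|]; rewrite ?logn0.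
pose n := `|numq q|%N; pose e := `|denq q|%N.
have e_gt0 : (0 < e)%N by rewrite absz_gt0 denq_neq0.
have Dn : (n ^ m = b ^ d * e ^ m)%N.
  apply/eqP; rewrite -(eqr_nat rat) natrM -Dq !natrX.
  rewrite [`|q|]normqE /n /e !natr_absz [`|denq q|]gtr0_norm ?denq_gt0 //.
  by rewrite expr_div_n divfK // expf_neq0 // intr_eq0 denq_neq0.
have n_gt0 : (0 < n)%N.
  move: Dn; case: (n) => [|//]; rewrite exp0n // => /esym/eqP.
  by rewrite muln_eq0 !expn_eq0 !eqn0Ngt b_gt0 e_gt0.
have Dlog : (m * logn l n = d + m * logn l e)%N.
  by rewrite -lognX Dn lognM ?expn_gt0 ?b_gt0 ?e_gt0 // !lognX lb muln1.
by have := dvdn_mulr (logn l n) (dvdnn m); rewrite Dlog dvdn_addl // dvdn_mulr.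
Qed.

Lemma minCpoly_XnsubC {m b l : nat} {r : algC} :
  (0 < m)%N -> prime l -> logn l b = 1%N -> r ^+ m = b%:R ->
  minCpoly r = 'X^m - (b%:R)%:P.
Proof.
move=> m_gt0 l_pr lb Dr.
have [p [Dp mon_p] dv_p] := minCpolyP r.
pose q : {poly rat} := 'X^m - (b%:R)%:P.
have Dq : pQtoC q = 'X^m - (b%:R)%:P by rewrite rmorphB /= map_polyXn map_polyC /= ratr_nat.
have dvd_pq : (p %| q)%R by rewrite -dv_p Dq rootE !hornerE Dr subrr.
have [rs Drs] := closed_field_poly_normal (minCpoly r).
rewrite (monicP (minCpoly_monic r)) scale1r in Drs.
have rsX w : w \in rs -> w ^+ m = b%:R.
  move=> rs_w; have : root (pQtoC q) w.
    by have /dvdpP[u ->] := dvd_pq; rewrite rmorphM rootM /= -Dp Drs root_prod_XsubC rs_w orbT.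
  by rewrite Dq rootE !hornerE subr_eq0 => /eqP.
(* The constant coefficient of minCpoly r is, up to sign, the product of its
   size rs roots, all of absolute value b^(1/m). *)
have p0X : `|p`_0| ^+ m = (b ^ size rs)%:R.
  apply: (can_inj ratCK).
  rewrite rmorphXn /= ratr_norm ratr_nat -coef_map -Dp Drs coef0_prod_XsubC.
  rewrite normrM normr_sign mul1r normr_prod -prodrXl natrX.
  rewrite (eq_big_seq (fun=> b%:R ^+ 1)) ?prodrXr ?sum1_size // => w /rsX Dw.
  by rewrite -normrX Dw normr_nat.
have size_p : size p = (size rs).+1.
  by rewrite -(size_map_poly (ratr : {rmorphism rat -> algC})) -Dp Drs size_prod_XsubC.
have size_q : size q = m.+1 by rewrite size_XnsubC.
have rs_gt0 : (0 < size rs)%N by have := size_minCpoly r; rewrite Dp size_map_poly size_p.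
have Dsize : size rs = m.
  apply/eqP; rewrite eqn_leq (dvdn_leq rs_gt0 (dvdn_of_normX_eq_natX m_gt0 l_pr lb p0X)).
  by rewrite -ltnS -size_p -size_q dvdp_leq // -size_poly_eq0 size_q.
suff Dpq : p = q by rewrite Dp Dpq.
apply/eqP; rewrite -eqp_monic ?monicXnsubC // -dvdp_size_eqp //.
by rewrite size_p size_q Dsize.
Qed.

Lemma iter_inj (T : Type) (f : T -> T) k : injective f -> injective (iter k f).
Proof. by move=> f_inj; elim: k => [//|k IHk] x y /= /f_inj/IHk. Qed.

Lemma aut_iter_fixed (w : algC) :
  exists2 j, (0 < j)%N & forall nu : {rmorphism algC -> algC}, iter j nu w = w.
Proof.
have [rs Drs] := closed_field_poly_normal (minCpoly w).
rewrite (monicP (minCpoly_monic w)) scale1r in Drs.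
exists (size rs)`!; first exact: fact_gt0.
move=> nu; have rs_iter i : iter i nu w \in rs.
  have Dmin : minCpoly (iter i nu w) = minCpoly w.
    by elim: i => //= i IHi; rewrite minCpoly_aut.
  by rewrite -root_prod_XsubC -Drs -Dmin root_minCpoly.
pose s := [seq iter i nu w | i <- iota 0 (size rs).+1].
have s_nuniq : ~~ uniq s.
  apply/negP => /uniq_leq_size le_s.
  have : (size s <= size rs)%N by apply: le_s => _ /mapP[i _ ->].
  by rewrite size_map size_iota ltnn.
have [i [j [lt_ij lt_j /eqP]]] := uniqPn 0 s_nuniq.
rewrite size_map size_iota in lt_j.
rewrite !(nth_map 0%N) ?nth_iota ?size_iota ?(ltn_trans lt_ij) // !add0n.
rewrite -(subnKC (ltnW lt_ij)) iterD => /eqP/esym/(@iter_inj _ _ i (fmorph_inj nu)) period.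
have /dvdnP[n ->] : (j - i %| (size rs)`!)%N.
  by rewrite dvdn_fact // subn_gt0 lt_ij -ltnS (leq_ltn_trans (leq_subr _ _)).
by rewrite iterM iter_fix.
Qed.

Fixpoint autC_iter (nu : {rmorphism algC -> algC}) k : {rmorphism algC -> algC} :=
  if k is k'.+1 then (nu \o autC_iter nu k' : {rmorphism algC -> algC}) else idfun.

Lemma autC_iterE nu k : autC_iter nu k =1 iter k nu.
Proof. by elim: k => // k IHk x /=; rewrite -IHk. Qed.

Lemma finite_over_Q_aut_iter_fixed {F : algC -> Prop} : finite_over_Q F ->
  exists2 k, (0 < k)%N &
    forall (nu : {rmorphism algC -> algC}) y, F y -> iter k nu y = y.
Proof.
move=> [s spanF].
have [k k_gt0 fix_s] : exists2 k, (0 < k)%N &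
    forall (nu : {rmorphism algC -> algC}) w, w \in s -> iter k nu w = w.
  elim: s {spanF} => [|w s [k k_gt0 fix_s]]; first by exists 1%N.
  have [j j_gt0 fix_w] := aut_iter_fixed w.
  exists (j * k)%N => [|nu v]; first by rewrite muln_gt0 j_gt0.
  rewrite inE => /predU1P[-> | s_v]; first by rewrite mulnC iterM iter_fix.
  by rewrite iterM iter_fix ?fix_s.
exists k => // nu _ /spanF[c ->].
rewrite -autC_iterE rmorph_sum; apply: eq_bigr => i _.
by rewrite rmorphM fmorph_rat autC_iterE fix_s ?mem_nth.
Qed.

Lemma minCpoly_irreducible (y : algC) :
  exists2 p : {poly rat}, minCpoly y = pQtoC p & irreducible_poly p.
Proof.
have [p [Dp mon_p] dv_p] := minCpolyP y; exists p => //.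
have py : root (pQtoC p) y by rewrite dv_p.
apply/(subfx_irreducibleP py (monic_neq0 mon_p)) => q qy q_neq0.
by rewrite dvdp_leq // -dv_p.
Qed.

Lemma normal_over_Q_aut (K : algC -> Prop) (nu : {rmorphism algC -> algC}) y :
  normal_over_Q K -> K y -> K (nu y).
Proof.
move=> normK Ky; have [p Dp irr_p] := minCpoly_irreducible y.
by apply: (normK p y) => //; rewrite -Dp ?root_minCpoly // -(minCpoly_aut nu) root_minCpoly.
Qed.

Lemma normal_over_Q_field_aut (K : algC -> Prop) (nu : {rmorphism algC -> algC}) :
  normal_over_Q K -> field_aut_of K nu.
Proof.
move=> normK; split=> [y||||]; first exact: normal_over_Q_aut.
- by move=> x y _ _; rewrite rmorphD.
- by move=> x y _ _; rewrite rmorphM.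
- exact: rmorph1.
split=> [x y _ _ /fmorph_inj // | y Ky].
exists (algC_invaut nu y); last exact: algC_invautK.
exact: normal_over_Q_aut.
Qed.

Definition autC_comm (s t : {rmorphism algC -> algC}) : {rmorphism algC -> algC} :=
  s \o (t \o (algC_invaut s \o algC_invaut t)).

Lemma autC_commE s t x : autC_comm s t x = s (t (algC_invaut s (algC_invaut t x))).
Proof. by []. Qed.

Lemma autC_comm_abelian_fixed (K : algC -> Prop) s t y :
  normal_over_Q K -> abelian_aut K -> K y -> autC_comm s t y = y.
Proof.
move=> normK abK Ky; rewrite autC_commE.
rewrite (abK t (algC_invaut s)) ?algC_invautK //;
  by [apply: normal_over_Q_field_aut | apply: normal_over_Q_aut].
Qed.

Lemma autC_comm_unity_fixed s t {n : nat} {w : algC} :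
  (0 < n)%N -> w ^+ n = 1 -> autC_comm s t w = w.
Proof.
move=> n_gt0 wn1; rewrite autC_commE (aut_unity_rootC t (algC_invaut s) n_gt0).
  by rewrite !algC_invautK.
by rewrite -rmorphXn wn1 rmorph1.
Qed.

Lemma Qab_autC_comm_fixed s t y : Qab y -> autC_comm s t y = y.
Proof. by case=> K [[_ _ normK] abK Ky]; apply: autC_comm_abelian_fixed abK Ky. Qed.

Definition comm_power_fixed k : algC -> Prop :=
  fun y => forall s t, iter k (autC_comm s t) y = y.

Lemma comm_power_fixed_subfield k : is_subfield (comm_power_fixed k).
Proof.
have fixedE s t y : iter k (autC_comm s t) y = autC_iter (autC_comm s t) k y.
  by rewrite autC_iterE.
split=> [s t | s t | x y Px Py s t | x Px s t | ]; rewrite ?fixedE.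
- exact: rmorph0.
- exact: rmorph1.
- by rewrite rmorphD -!fixedE Px Py.
- by rewrite rmorphN -fixedE Px.
split=> [x y Px Py s t | x Px _ s t]; rewrite fixedE.
  by rewrite rmorphM -!fixedE Px Py.
by rewrite fmorphV -fixedE Px.
Qed.

Lemma comm_power_fixed_unity k n w : (0 < n)%N -> w ^+ n = 1 -> comm_power_fixed k w.
Proof.
move=> n_gt0 wn1 s t.
by rewrite iter_fix // (autC_comm_unity_fixed _ _ n_gt0).
Qed.

Lemma comm_power_fixed_mul_unity k n u x :
  (0 < n)%N -> u ^+ n = 1 -> comm_power_fixed k x -> comm_power_fixed k (u * x).
Proof.
have [_ _ _ _ [fixed_mul _]] := comm_power_fixed_subfield k.
by move=> n_gt0 un1; apply: fixed_mul; apply: comm_power_fixed_unity un1.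
Qed.

Lemma compositum_Qab_comm_power_fixed (F : algC -> Prop) k :
    (forall (nu : {rmorphism algC -> algC}) y, F y -> iter k nu y = y) ->
  forall x, compositum F Qab x -> comm_power_fixed k x.
Proof.
move=> F_fixed x; apply=> [|y Fy | y Qab_y]; first exact: comm_power_fixed_subfield.
  by move=> s t; rewrite F_fixed.
by move=> s t; rewrite iter_fix ?Qab_autC_comm_fixed.
Qed.

Lemma iter_rmorph_eigen (R : pzSemiRingType) (f : {rmorphism R -> R}) {c x : R} i :
  f c = c -> f x = c * x -> iter i f x = c ^+ i * x.
Proof.
move=> fc fx; elim: i => [|i IHi] /=; first by rewrite mul1r.
by rewrite IHi rmorphM rmorphXn fc fx mulrA -exprSr.
Qed.

Lemma squarefree_int_prime_logn1 {a : int} :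
  squarefree_int a -> a != 1 -> a != -1 -> exists2 l, prime l & logn l `|a| = 1%N.
Proof.
move=> sqfree_a a_neq1 a_neqN1.
have a_neq0 : a != 0.
  by apply/eqP=> a0; have := sqfree_a 2; rewrite a0 dvdz0 => /(_ isT).
have a_gt1 : (1 < `|a|)%N.
  by case: a a_neq0 a_neq1 a_neqN1 {sqfree_a} => [[|[|n]]|[|n]].
have l_pr := pdiv_prime a_gt1; exists (pdiv `|a|) => //.
apply/eqP; rewrite eqn_leq andbC logn_gt0 mem_primes l_pr pdiv_dvd ltnW //=.
rewrite leqNgt -pfactor_dvdn ?(ltnW a_gt1) // -mulnn; apply/negP => sq_dvd.
have := sqfree_a (pdiv `|a|); rewrite dvdzE abszM => /(_ sq_dvd) [pdiv1].
by rewrite pdiv1 in l_pr.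
Qed.

Lemma autC_comm_conjC_radical (rho : {rmorphism algC -> algC}) m z r :
    m.-primitive_root z -> r != 0 -> r^* = r -> r ^+ m \in Crat ->
  rho r = z * r -> autC_comm rho Num.conj r = z ^+ 2 * r.
Proof.
move=> z_prim r_neq0 r_real r_rat Drho.
have m_gt0 := prim_order_gt0 z_prim.
have z_neq0 : z != 0.
  by apply: contra_eq_neq (prim_expr_order z_prim) => ->; rewrite expr0n gtn_eqF // eq_sym oner_eq0.
set w := algC_invaut rho r.
have [j Dw] : exists j, w = z ^+ j * r.
  have wr1 : (w / r) ^+ m = 1.
    by rewrite expr_div_n -rmorphXn aut_Crat ?divff ?expf_neq0.
  by have [j Dj] := prim_rootP z_prim wr1; exists j; rewrite -Dj divfK.
have [e De] : exists e, rho z = z ^+ e.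
  have rho_z : (rho z) ^+ m = 1 by rewrite -rmorphXn prim_expr_order // rmorph1.
  by have [e De] := prim_rootP z_prim rho_z; exists e.
have zej : (z ^+ e) ^+ j = z^-1.
  rewrite -[RHS]mul1r; apply: (canRL (mulfK z_neq0)); apply: (mulIf r_neq0).
  by rewrite mul1r -mulrA -Drho -{2}(algC_invautK rho r) -/w Dw rmorphM rmorphXn De.
have conj_z : z^* = z^-1.
  have z_norm1 : `|z| = 1.
    by apply/eqP; rewrite -(pexpr_eq1 m_gt0) ?normr_ge0 // -normrX prim_expr_order ?normr1.
  by rewrite invC_norm z_norm1 expr1n invr1 mul1r.
rewrite autC_commE -{1}r_real algC_autK -/w Dw rmorphM rmorphXn /= conj_z r_real.
by rewrite rmorphM rmorphXn fmorphV De Drho exprVn zej invrK mulrA -expr2.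
Qed.

Lemma comm_power_fixed_radical_dvdn k {m b l : nat} {r : algC} :
    (0 < m)%N -> prime l -> logn l b = 1%N -> 0 <= r -> r ^+ m = b%:R ->
  comm_power_fixed k r -> (m %| 2 * k)%N.
Proof.
move=> m_gt0 l_pr lb r_ge0 Dr r_fixed.
have r_neq0 : r != 0.
  apply: contra_eq_neq Dr => ->; rewrite expr0n gtn_eqF // eq_sym pnatr_eq0.
  by apply/eqP => b0; rewrite b0 logn0 in lb.
have [z z_prim] := C_prim_root_exists m_gt0.
have [rho Drho] : exists rho : {rmorphism algC -> algC}, rho r = z * r.
  apply: aut_minCpoly_root; rewrite (minCpoly_XnsubC m_gt0 l_pr lb Dr) rootE !hornerE.
  by rewrite exprMn prim_expr_order // mul1r Dr subrr.
have comm_z2 : autC_comm rho Num.conj (z ^+ 2) = z ^+ 2.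
  by apply: (autC_comm_unity_fixed _ _ m_gt0); rewrite exprAC (prim_expr_order z_prim) expr1n.
have comm_r : autC_comm rho Num.conj r = z ^+ 2 * r.
  by apply: autC_comm_conjC_radical z_prim r_neq0 _ _ Drho; rewrite ?geC0_conj // Dr rpred_nat.
have := r_fixed rho Num.conj.
rewrite (iter_rmorph_eigen _ _ k comm_z2 comm_r) => /(canRL (mulfK r_neq0)).
by rewrite divff // -exprM => /eqP; rewrite -(prim_order_dvd z_prim).
Qed.

Theorem mainTheorem13 (a : int) (F : algC -> Prop) :
  squarefree_int a -> a != 1 -> a != -1 ->
  finite_galois_over_Q F ->
  exists N : nat, (0 < N)%N /\
    forall m : nat, (0 < m)%N ->
      (exists x : algC, compositum F Qab x /\ x ^+ m = a%:~R) ->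
      (m %| N)%N.
Proof.
move=> sqfree_a a_neq1 a_neqN1 [_ finF _].
have [k k_gt0 F_fixed] := finite_over_Q_aut_iter_fixed finF.
exists (2 * k)%N; split=> [|m m_gt0 [x [Fx Dx]]]; first by rewrite muln_gt0.
have [l l_pr l_a] := squarefree_int_prime_logn1 sqfree_a a_neq1 a_neqN1.
pose r := m.-root (`|a|%:R : algC).
have Dr : r ^+ m = `|a|%:R by rewrite rootCK.
apply: (comm_power_fixed_radical_dvdn k m_gt0 l_pr l_a _ Dr); first by rewrite rootC_ge0 ?ler0n.
have a_neq0 : a != 0 by apply/eqP => a0; rewrite a0 /= logn0 in l_a.
have x_neq0 : x != 0.
  by apply: contra_neq a_neq0 => x0; apply/eqP; rewrite -(intr_eq0 algC) -Dx x0 expr0n gtn_eqF.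
rewrite -(divfK x_neq0 r); apply: (@comm_power_fixed_mul_unity _ (2 * m)).
- by rewrite muln_gt0.
- rewrite mulnC exprM expr_div_n Dr Dx expr_div_n natr_absz intr_norm intr_normK ?rpred_int //.
  by rewrite divff // expf_neq0 // intr_eq0.
exact: compositum_Qab_comm_power_fixed Fx.
Qed.
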